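(* For disjunctive guarded systems of type $(A,B)$: for all $n\ge|B|+1$, if $(A,B)^{(1,n)}$ has a deadlock then $(A,B)^{(1,n+1)}$ has a deadlock.
   Context: A process template is $U=(Q_U,\mathit{init}_U,\Sigma_U,\delta_U)$ with finite states $Q_U$, initial state $\mathit{init}_U$, finite input alphabet $\Sigma_U$ and guarded transitions $\delta_U\subseteq Q_U\times\Sigma_U\times 2^{Q_A\cup Q_B}\times Q_U$; templates $A,B$ have disjoint state sets and disjoint alphabets, and $|B|=|Q_B|$. The system $(A,B)^{(1,n)}$ consists of one copy of $A$ and $n$ copies $B_1,\dots,B_n$ of $B$; a global state $s$ gives each process a local state, a global input $e$ gives each process an input letter, and initially all processes are in their initial states. In a disjunctive system a guard $g$ is satisfied for process $p$ in $s$ iff some process $p'\ne p$ has $s(p')\in g$. A local transition $(q,\sigma,g,q')$ of $p$ is enabled for $(s,e)$ if $s(p)=q$, $e(p)=\sigma$ and $g$ is satisfied for $p$ in $s$; a process is enabled if one of its transitions is; a global step changes the state of exactly one process along an enabled transition. A path is a sequence of configurations $(s_1,e_1,p_1),(s_2,e_2,p_2),\dots$ where $p_t$ makes the step from $s_t$ to $s_{t+1}$ under $e_t$, a configuration $(s,e,\bot)$ occurs (as the last one) exactly when all processes are disabled, and $e_{t+1}(p)=e_t(p)$ for every process $p$ not moving at moment $t$. A run is a maximal path from the initial state. A run is globally deadlocked if it is finite; an infinite run is locally deadlocked if some process is disabled at all moments from some moment on; a system has a deadlock if it has a globally or locally deadlocked run. *)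

From mathcomp Require Import all_boot.
Set Implicit Arguments. Unset Strict Implicit. Unset Printing Implicit Defensive.

Section Guarded.
Variables (QA QB SA SB : finType).

(* Q_A and Q_B are disjoint: the union Q_A \cup Q_B is the sum type. *)
Definition GQ : finType := (QA + QB)%type.

Record template (Q S : finType) := Template {
  t_init : Q;
  t_delta : {set (Q * S * {set GQ} * Q)} }.

Variables (A : template QA SA) (B : template QB SB).

(* Processes of (A,B)^(1,n): None = the copy of A, Some i = B_i. *)
Definition proc (n : nat) := option 'I_n.
Definition gstate (n : nat) := (QA * ('I_n -> QB))%type.
Definition ginput (n : nat) := (SA * ('I_n -> SB))%type.

Definition lstate n (s : gstate n) (p : proc n) : GQ :=
  match p with None => inl s.1 | Some i => inr (s.2 i) end.

Definition guard_sat n (s : gstate n) (p : proc n) (g : {set GQ}) : Prop :=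
  exists p' : proc n, p' <> p /\ lstate s p' \in g.

Definition trans_enabled n (s : gstate n) (e : ginput n) (p : proc n)
  (g : {set GQ}) (q' : GQ) : Prop :=
  match p with
  | None => exists qa, q' = inl qa /\
      (s.1, e.1, g, qa) \in t_delta A /\ guard_sat s p g
  | Some i => exists qb, q' = inr qb /\
      (s.2 i, e.2 i, g, qb) \in t_delta B /\ guard_sat s p g
  end.

Definition enabled n (s : gstate n) (e : ginput n) (p : proc n) : Prop :=
  exists g q', trans_enabled s e p g q'.

Definition step n (s : gstate n) (e : ginput n) (p : proc n) (s' : gstate n) : Prop :=
  exists g q', trans_enabled s e p g q' /\
    lstate s' p = q' /\ forall p', p' <> p -> lstate s' p' = lstate s p'.

Definition inputs_kept n (e : ginput n) (p : proc n) (e' : ginput n) : Prop :=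
  (p <> None -> e'.1 = e.1) /\ (forall i, p <> Some i -> e'.2 i = e.2 i).

Definition initial n (s : gstate n) : Prop :=
  s.1 = t_init A /\ forall i, s.2 i = t_init B.

Definition config n := (gstate n * ginput n * proc n)%type.

Definition valid_step n (rho : nat -> config n) (t : nat) : Prop :=
  step (rho t).1.1 (rho t).1.2 (rho t).2 (rho t.+1).1.1 /\
  inputs_kept (rho t).1.2 (rho t).2 (rho t.+1).1.2.

(* A finite run: configurations 0..k-1 are real steps, and the last
   configuration (s_k, e_k, bot) has all processes disabled.
   A run is globally deadlocked iff it is finite. *)
Definition has_global_deadlock n : Prop :=
  exists (rho : nat -> config n) (k : nat),
    initial (rho 0).1.1 /\
    (forall t, t < k -> valid_step rho t) /\
    (forall p : proc n, ~ enabled (rho k).1.1 (rho k).1.2 p).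

(* An infinite run (all p_t enabled, since each step is along an enabled
   transition) in which some process is disabled from some moment on. *)
Definition has_local_deadlock n : Prop :=
  exists rho : nat -> config n,
    initial (rho 0).1.1 /\
    (forall t, valid_step rho t) /\
    exists (p : proc n) (t0 : nat),
      forall t, t0 <= t -> ~ enabled (rho t).1.1 (rho t).1.2 p.

Definition has_deadlock n : Prop := has_global_deadlock n \/ has_local_deadlock n.

End Guarded.

From mathcomp Require Import all_boot.
Set Implicit Arguments. Unset Strict Implicit. Unset Printing Implicit Defensive.

(* The extra process B_(n+1) shadows a fixed B_i of a given run: it starts in
   the same initial state and repeats every move of B_i right after it. This is
   possible because the guard used by B_i was satisfied by another process,
   which has not moved in between. Since B_(n+1) always holds a state that B_i
   held at the current or previous moment, the only guards it can satisfy anew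
   are those B_i satisfied. Hence a process other than B_i that is disabled
   from some moment on stays disabled (local deadlock, choosing i with n >= 2),
   and in a globally deadlocked final configuration, where by pigeonhole
   (n > |Q_B|) B_i shares its state with some B_j, every process, B_(n+1)
   included, stays disabled (global deadlock). *)

Lemma card_lt_noninjective (aT rT : finType) (f : aT -> rT) :
  #|rT| < #|aT| -> ~~ injectiveb f.
Proof. by move=> lt_card; apply/injectiveP => /leq_card; rewrite leqNgt lt_card. Qed.

Lemma exists_ord_neq n (j : 'I_n) : 1 < n -> exists i : 'I_n, i != j.
Proof.
move=> n_gt1; have /card_gt0P[i] : 0 < #|predC1 j| by rewrite cardC1 card_ord ltn_predRL.
by exists i.
Qed.

Definition extend n T (f : 'I_n -> T) (x : T) (k : 'I_n.+1) : T :=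
  if unlift ord_max k is Some j then f j else x.

Lemma extend_lift n T (f : 'I_n -> T) x j : extend f x (lift ord_max j) = f j.
Proof. by rewrite /extend liftK. Qed.

Lemma extend_max n T (f : 'I_n -> T) x : extend f x ord_max = x.
Proof. by rewrite /extend unlift_none. Qed.

Lemma extend_const n T (f : 'I_n -> T) x c :
  (forall j, f j = c) -> x = c -> forall k, extend f x k = c.
Proof. by move=> fc xc k; rewrite /extend; case: unlift. Qed.

Definition lift_proc n (p : proc n) : proc n.+1 := omap (lift ord_max) p.
Definition new_proc n : proc n.+1 := Some ord_max.

Variant lift_proc_spec n : proc n.+1 -> Type :=
  | LiftProcNew : lift_proc_spec (new_proc n)
  | LiftProcOld p : lift_proc_spec (lift_proc p).

Lemma lift_procP n (q : proc n.+1) : lift_proc_spec q.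
Proof.
case: q => [k|]; last exact: (LiftProcOld None).
case: (unliftP ord_max k) => [j ->|->]; last exact: LiftProcNew.
exact: (LiftProcOld (Some j)).
Qed.

Lemma lift_proc_inj n : injective (@lift_proc n).
Proof. exact/inj_omap/lift_inj. Qed.

Lemma lift_proc_neq_new n (p : proc n) : lift_proc p <> new_proc n.
Proof.
case: p => [j|] //= [] /eqP; apply/negP; rewrite eq_sym; exact: neq_lift ord_max j.
Qed.

Section Cutoff.
Variables (QA QB SA SB : finType).
Variables (A : template QA QB QA SA) (B : template QA QB QB SB).

Definition local_trans n (s : gstate QA QB n) (e : ginput SA SB n) (p : proc n)
    (g : {set GQ QA QB}) (q' : GQ QA QB) : Prop :=
  match p with
  | None => exists qa, q' = inl qa /\ (s.1, e.1, g, qa) \in t_delta A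
  | Some j => exists qb, q' = inr qb /\ (s.2 j, e.2 j, g, qb) \in t_delta B
  end.

Lemma trans_enabledE n (s : gstate QA QB n) e p g q' :
  trans_enabled A B s e p g q' <-> local_trans s e p g q' /\ guard_sat s p g.
Proof.
by case: p => [j|] /=; split=> [[q [-> [tr sat]]] | [[q [-> tr]] sat]];
  [split=> //; exists q | exists q | split=> //; exists q | exists q].
Qed.

Lemma enabled_intro n (s : gstate QA QB n) e p g q' p' :
  local_trans s e p g q' -> p' <> p -> lstate s p' \in g -> enabled A B s e p.
Proof.
by move=> tr ne sat; exists g, q'; apply/trans_enabledE; split=> //; exists p'.
Qed.

Lemma local_trans_frame n (s s' : gstate QA QB n) e e' p0 p g q' :
  step A B s e p0 s' -> inputs_kept e p0 e' -> p <> p0 ->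
  local_trans s' e' p g q' -> local_trans s e p g q'.
Proof.
move=> [_ [_ [_ [_ frame]]]] [keptA keptB] ne.
case: p ne (frame p ne) => [j|] ne /= [->]; rewrite ?keptA ?keptB //.
all: by move=> E; apply: ne; rewrite E.
Qed.

Section Lift.
Variable n : nat.
Implicit Types (s : gstate QA QB n) (e : ginput SA SB n) (p : proc n).

Definition lift_state s (x : QB) : gstate QA QB n.+1 := (s.1, extend s.2 x).
Definition lift_input e (y : SB) : ginput SA SB n.+1 := (e.1, extend e.2 y).

Lemma lstate_lift s x p : lstate (lift_state s x) (lift_proc p) = lstate s p.
Proof. by case: p => [j|] //=; rewrite extend_lift. Qed.

Lemma lstate_new s x : lstate (lift_state s x) (new_proc n) = inr x.
Proof. by rewrite /= extend_max. Qed.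

Lemma local_trans_lift s e x y p g q' :
  local_trans (lift_state s x) (lift_input e y) (lift_proc p) g q' =
  local_trans s e p g q'.
Proof. by case: p => [j|] //=; rewrite !extend_lift. Qed.

Lemma local_trans_new s e x y g q' :
  local_trans (lift_state s x) (lift_input e y) (new_proc n) g q' =
  exists qb, q' = inr qb /\ (x, y, g, qb) \in t_delta B.
Proof. by rewrite /= !extend_max. Qed.

Lemma guard_sat_lift s x p g :
  guard_sat (lift_state s x) (lift_proc p) g <-> guard_sat s p g \/ inr x \in g.
Proof.
split=> [[q [ne sat]] | [[p' [ne sat]] | sat]].
- case: q / lift_procP ne sat => [|p'] ne; first by rewrite lstate_new; right.
  by rewrite lstate_lift => sat; left; exists p'; split=> // E; apply: ne; rewrite E.
- by exists (lift_proc p'); rewrite lstate_lift; split=> // /lift_proc_inj.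
- by exists (new_proc n); rewrite lstate_new; split=> // /esym /lift_proc_neq_new.
Qed.

Lemma guard_sat_new s x g :
  guard_sat (lift_state s x) (new_proc n) g -> exists p, lstate s p \in g.
Proof.
move=> [q [ne sat]]; case: q / lift_procP ne sat => [|p] ne //.
by rewrite lstate_lift => sat; exists p.
Qed.

Lemma step_lift s e s' x y p :
  step A B s e p s' ->
  step A B (lift_state s x) (lift_input e y) (lift_proc p) (lift_state s' x).
Proof.
move=> [g [q' [/trans_enabledE [tr sat] [moved frame]]]].
exists g, q'; split.
  by apply/trans_enabledE; rewrite local_trans_lift; split=> //; apply/guard_sat_lift; left.
split; first by rewrite lstate_lift.
move=> q; case: q / lift_procP => [|p'] ne; first by rewrite !lstate_new.
by rewrite !lstate_lift; apply: frame => E; apply: ne; rewrite E.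
Qed.

Lemma inputs_kept_lift e e' y p :
  inputs_kept e p e' -> inputs_kept (lift_input e y) (lift_proc p) (lift_input e' y).
Proof.
move=> [keptA keptB]; split=> [ne | k ne] /=.
  by apply: keptA => E; apply: ne; rewrite E.
case: (unliftP ord_max k) ne => [j ->|->] ne; rewrite ?extend_lift ?extend_max //.
by apply: keptB => E; apply: ne; rewrite E.
Qed.

Lemma step_new_copy s e e' s' i :
  step A B s e (Some i) s' ->
  step A B (lift_state s' (s.2 i)) (lift_input e' (e.2 i)) (new_proc n)
    (lift_state s' (s'.2 i)).
Proof.
move=> [g [q' [/trans_enabledE [tr [p [ne sat]]] [moved frame]]]].
exists g, q'; split.
  apply/trans_enabledE; rewrite local_trans_new; split=> //.
  exists (lift_proc p); rewrite lstate_lift frame //.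
  by split=> //; apply: lift_proc_neq_new.
split; first by rewrite lstate_new -moved.
by move=> q; case: q / lift_procP => [|p'] ne' //; rewrite !lstate_lift.
Qed.

Lemma inputs_kept_new e y y' :
  inputs_kept (lift_input e y) (new_proc n) (lift_input e y').
Proof.
split=> // k ne /=.
by case: (unliftP ord_max k) ne => [j ->|->] ne; rewrite ?extend_lift //; case: ne.
Qed.

Lemma enabled_liftE s e x y p :
  enabled A B (lift_state s x) (lift_input e y) (lift_proc p) ->
  enabled A B s e p \/ exists g q', local_trans s e p g q' /\ inr x \in g.
Proof.
move=> [g [q' /trans_enabledE [tr /guard_sat_lift [sat|sat]]]];
  rewrite local_trans_lift in tr; last by right; exists g, q'.
by left; exists g, q'; apply/trans_enabledE.
Qed.

Lemma enabled_lift_dup s e x y p p' :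
  p' <> p -> lstate s p' = inr x ->
  enabled A B (lift_state s x) (lift_input e y) (lift_proc p) -> enabled A B s e p.
Proof.
move=> ne dup /enabled_liftE [//|[g [q' [tr sat]]]].
by apply: enabled_intro tr ne _; rewrite dup.
Qed.

Lemma enabled_new_dup s e i j :
  i != j -> s.2 j = s.2 i ->
  enabled A B (lift_state s (s.2 i)) (lift_input e (e.2 i)) (new_proc n) ->
  enabled A B s e (Some i).
Proof.
move=> neq dup [g [q' /trans_enabledE [tr /guard_sat_new [p sat]]]].
rewrite local_trans_new in tr.
have {}tr : local_trans s e (Some i) g q' by [].
case: (eqVneq p (Some i)) sat => [-> | ne] sat.
  apply: (enabled_intro (p' := Some j)) tr _ _; last by rewrite /= dup.
  by move=> [eq_j]; rewrite eq_j eqxx in neq.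
by apply: enabled_intro tr _ sat; apply/eqP.
Qed.

Lemma lift_deadlocked s e i j :
  i != j -> s.2 j = s.2 i -> (forall p, ~ enabled A B s e p) ->
  forall q, ~ enabled A B (lift_state s (s.2 i)) (lift_input e (e.2 i)) q.
Proof.
move=> neq dup dead q; case: q / lift_procP => [|p] en.
  exact: dead _ (enabled_new_dup neq dup en).
case: (eqVneq p (Some i)) en => [-> | ne] en.
  apply: dead _ (enabled_lift_dup (p' := Some j) _ _ en); last by rewrite /= dup.
  by move=> [eq_j]; rewrite eq_j eqxx in neq.
apply: dead _ (enabled_lift_dup (p' := Some i) _ _ en) => // eq_p.
by rewrite eq_p eqxx in ne.
Qed.

End Lift.

Section Shadow.
Variables (n : nat) (rho : nat -> config QA QB SA SB n) (i : 'I_n).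

(* (t, false) is moment t of rho; (t, true) is the extra moment right after
   B_i moved at t, at which the new process B_(n+1) repeats that move. *)
Fixpoint shadow_pos m : nat * bool :=
  if m is m'.+1 then
    let: (t, b) := shadow_pos m' in
    if ~~ b && ((rho t).2 == Some i) then (t, true) else (t.+1, false)
  else (0, false).

Definition shadow_config (tb : nat * bool) : config QA QB SA SB n.+1 :=
  let: (t, b) := tb in
  let x := (rho t).1.1.2 i in
  let y := (rho t).1.2.2 i in
  if b then (lift_state (rho t.+1).1.1 x, lift_input (rho t.+1).1.2 y, new_proc n)
  else (lift_state (rho t).1.1 x, lift_input (rho t).1.2 y, lift_proc (rho t).2).

Definition shadow_run m := shadow_config (shadow_pos m).

Lemma shadow_pos_copy m t : shadow_pos m = (t, true) -> (rho t).2 = Some i.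
Proof.
case: m => [//|m] /=; case: (shadow_pos m) => t' b.
by case: ifP => // /andP[_ /eqP mover] [<-].
Qed.

Lemma shadow_pos_homo : {homo (fun m => (shadow_pos m).1) : m m' / m <= m'}.
Proof.
apply: homo_leq leqnn leq_trans _ => m /=.
by case: (shadow_pos m) => t b; case: ifP.
Qed.

Lemma shadow_pos_hits t :
  exists m, shadow_pos m = (t, false) /\ forall m', m' < m -> (shadow_pos m').1 < t.
Proof.
elim: t => [|t [m [pos_m before_m]]]; first by exists 0.
have below m' : m' <= m -> (shadow_pos m').1 < t.+1.
  by rewrite leq_eqVlt => /predU1P[-> | /before_m /ltnW]; rewrite ?pos_m.
case mover: ((rho t).2 == Some i).
  have pos_m1 : shadow_pos m.+1 = (t, true) by rewrite /= pos_m /= mover.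
  exists m.+2; split; first by rewrite /= pos_m /= mover.
  by move=> m'; rewrite ltnS leq_eqVlt => /predU1P[-> | /below]; rewrite ?pos_m1.
exists m.+1; split; first by rewrite /= pos_m /= mover.
by move=> m'; rewrite ltnS; apply: below.
Qed.

Lemma shadow_run_initial : initial A B (rho 0).1.1 -> initial A B (shadow_run 0).1.1.
Proof. by move=> [initA initB]; split=> //= k; apply: extend_const. Qed.

Lemma valid_shadow_run m :
  valid_step A B rho (shadow_pos m).1 -> valid_step A B shadow_run m.
Proof.
move: (@shadow_pos_copy m); rewrite /valid_step /shadow_run /=.
case: (shadow_pos m) => t [] /= copy [st kept].
  rewrite (copy t erefl) in st kept.
  by split; [apply: step_new_copy | apply: inputs_kept_new].
case: eqP => [mover | other] /=.
  by split; [apply: step_lift | apply: inputs_kept_lift].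
have [same_x] : inr ((rho t.+1).1.1.2 i) = inr ((rho t).1.1.2 i) :> QA + QB.
  by case: st => g [q' [_ [_ frame]]]; exact: (frame (Some i) (nesym other)).
have same_y : (rho t.+1).1.2.2 i = (rho t).1.2.2 i := kept.2 i other.
by rewrite same_x same_y; split; [apply: step_lift | apply: inputs_kept_lift].
Qed.

Lemma shadow_run_disabled p t0 :
  p <> Some i -> (forall t, valid_step A B rho t) ->
  (forall t, t0 <= t -> ~ enabled A B (rho t).1.1 (rho t).1.2 p) ->
  forall m, t0 <= (shadow_pos m).1 ->
  ~ enabled A B (shadow_run m).1.1 (shadow_run m).1.2 (lift_proc p).
Proof.
move=> ne valid dead m; move: (@shadow_pos_copy m); rewrite /shadow_run.
case: (shadow_pos m) => t [] /= copy late en; last first.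
  exact: dead t late (enabled_lift_dup (nesym ne) erefl en).
case/enabled_liftE: en => [en | [g [q' [tr sat]]]]; first exact: dead t.+1 (leqW late) en.
have [st kept] := valid t; rewrite (copy t erefl) in st kept.
exact: dead t late (enabled_intro (local_trans_frame st kept ne tr) (nesym ne) sat).
Qed.

End Shadow.

Lemma global_deadlock_lift n :
  #|QB| < n -> has_global_deadlock A B n -> has_global_deadlock A B n.+1.
Proof.
move=> large [rho [k [init [valid dead]]]].
have /injectivePn[i [j neq dup]] : ~~ injectiveb (rho k).1.1.2.
  by apply: card_lt_noninjective; rewrite card_ord.
have [m [pos_m before_m]] := shadow_pos_hits rho i k.
exists (shadow_run rho i), m; split; first exact: shadow_run_initial.
split; first by move=> m' /before_m /valid /valid_shadow_run.
by rewrite /shadow_run pos_m; apply: lift_deadlocked neq (esym dup) dead.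
Qed.

Lemma local_deadlock_lift n :
  1 < n -> has_local_deadlock A B n -> has_local_deadlock A B n.+1.
Proof.
move=> n_gt1 [rho [init [valid [p [t0 dead]]]]].
have [i ne] : exists i, Some i <> p.
  case: p {dead} => [j|]; last by exists (Ordinal (ltnW n_gt1)).
  by have [i ne] := exists_ord_neq j n_gt1; exists i => -[E]; rewrite E eqxx in ne.
have [m0 [pos_m0 _]] := shadow_pos_hits rho i t0.
exists (shadow_run rho i); split; first exact: shadow_run_initial.
split; first by move=> m; apply: valid_shadow_run.
exists (lift_proc p), m0 => m le_m0m.
apply: (shadow_run_disabled (nesym ne) valid dead).
by have := shadow_pos_homo rho i le_m0m; rewrite pos_m0.
Qed.

End Cutoff.

Theorem mainTheorem8 (QA QB SA SB : finType)
  (A : template QA QB QA SA) (B : template QA QB QB SB) (n : nat) :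
  #|QB|.+1 <= n ->
  has_deadlock A B n -> has_deadlock A B n.+1.
Proof.
move=> large [global | local]; first by left; apply: global_deadlock_lift global.
have QB_gt0 : 0 < #|QB| by apply/card_gt0P; exists (t_init B).
by right; apply: local_deadlock_lift local; apply: leq_ltn_trans large.
Qed.
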